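(* For the FCIQMC step, on the event $M_t\ge m$, $$\mathbb{E}\bigl(\|F(A,v_t)-Av_t\|_2^2\mid\mathcal{F}_t\bigr)\le C_e\frac{\|A\|_1^2\|v_t\|_1^2}{m},\qquad C_e=\frac{\max_k(\|a_k\|_0-2)\|a_{o,k}\|_2^2+\frac12}{\|A\|_1^2}.$$
   Context: Let $A\in\mathbb{R}^{N\times N}$ be real symmetric, with every diagonal entry nonzero and every column having at least 2 nonzero entries. Write $A=A_d+A_o$ with $A_d$ the diagonal part and $A_o$ the off-diagonal part; $a_k=A(:,k)$, $a_{o,k}=A_o(:,k)$; $\|x\|_0$ is the number of nonzero entries; $\|A\|_1=\max_k\sum_i|A_{ik}|$; $e_l$ the $l$-th standard basis vector. FCIQMC step: the current iterate $v_t\in\mathbb{Z}^N$ is represented by $M_t=\|v_t\|_1$ signed particles, $|v_t(k)|$ particles at location $k$ each with sign $\mathrm{sgn}(v_t(k))$. For each particle with location $k$ and sign $s$, independently of all other particles (conditionally on $\mathcal F_t$): (Spawning) choose $l$ uniformly at random among the indices $j$ with $A_o(j,k)\neq0$; let $Q=\|a_{o,k}\|_0|A(l,k)|$ and $n=\lfloor Q\rfloor$ w.p. $1-(Q-\lfloor Q\rfloor)$, $n=\lfloor Q\rfloor+1$ w.p. $Q-\lfloor Q\rfloor$; contribute $n\,\mathrm{sgn}(A(l,k)s)\,e_l$. (Diagonal) independently, $Q=|A(k,k)|$, $n$ by the same rounding rule, contribute $n\,\mathrm{sgn}(A(k,k)s)\,e_k$. (Annihilation) $F(A,v_t)=v_{t+1}$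 is the sum of all contributions. $\mathcal{F}_t=\sigma(v_1,\dots,v_t)$. *)

From HB Require Import structures.
From mathcomp Require Import all_boot all_order all_algebra.
Set Implicit Arguments. Unset Strict Implicit. Unset Printing Implicit Defensive.
Import Order.TTheory GRing.Theory Num.Theory.
Local Open Scope ring_scope.

Section FCIQMC.
Variables (R : archiRealFieldType) (N : nat) (A : 'M[R]_N).

Definition nnz_col (k : 'I_N) : nat := #|[set i | A i k != 0]|.
Definition nnz_off (k : 'I_N) : nat := #|[set j | (j != k) && (A j k != 0)]|.
Definition sqnorm_off (k : 'I_N) : R := \sum_(i | i != k) A i k ^+ 2.
Definition norm1_mx : R := \big[Num.max/0]_k \sum_i `|A i k|.
Definition norm1_int (v : 'I_N -> int) : R := \sum_k `|(v k)%:~R : R|.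
Definition Amulv (v : 'I_N -> int) (i : 'I_N) : R := \sum_k A i k * (v k)%:~R.

Definition frac (x : R) : R := x - (Num.floor x)%:~R.
Definition round_prob (Q : R) (b : bool) : R := if b then frac Q else 1 - frac Q.
Definition round_val (Q : R) (b : bool) : R := (Num.floor Q + b%:Z)%:~R.

(* A particle is a pair (location k, copy index c < |v k|); its sign is sgn(v k).
   Its random outcome is (l, b1, b2): spawning target l, spawning rounding bit b1,
   diagonal rounding bit b2. *)
Definition particle (v : 'I_N -> int) := {k : 'I_N & 'I_(absz (v k))}.
Definition outcome := ('I_N * bool * bool)%type.

Definition sgnv (v : 'I_N -> int) (k : 'I_N) : R := Num.sg ((v k)%:~R : R).

Definition particle_prob (k : 'I_N) (o : outcome) : R :=
  let: (l, b1, b2) := o in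
  (if (l != k) && (A l k != 0) then ((nnz_off k)%:R)^-1 else 0)
  * round_prob ((nnz_off k)%:R * `|A l k|) b1
  * round_prob `|A k k| b2.

Definition particle_contrib (k : 'I_N) (s : R) (o : outcome) (i : 'I_N) : R :=
  let: (l, b1, b2) := o in
  (if i == l then round_val ((nnz_off k)%:R * `|A l k|) b1 * Num.sg (A l k * s) else 0)
  + (if i == k then round_val `|A k k| b2 * Num.sg (A k k * s) else 0).

(* F(A,v) for a joint outcome w of all particles (annihilation = summation) *)
Definition Fstep (v : 'I_N -> int) (w : {ffun particle v -> outcome}) (i : 'I_N) : R :=
  \sum_(p : particle v) particle_contrib (tag p) (sgnv v (tag p)) (w p) i.

Definition joint_prob (v : 'I_N -> int) (w : {ffun particle v -> outcome}) : R :=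
  \prod_(p : particle v) particle_prob (tag p) (w p).

(* E( ||F(A,v) - A v||_2^2 ), conditionally on v_t = v *)
Definition expected_sqerr (v : 'I_N -> int) : R :=
  \sum_(w : {ffun particle v -> outcome})
     joint_prob w * \sum_i (Fstep w i - Amulv v i) ^+ 2.

Definition C_e : R :=
  (\big[Num.max/0]_k (((nnz_col k)%:R - 2) * sqnorm_off k) + 2^-1) / norm1_mx ^+ 2.

End FCIQMC.

(* Given v, the particles evolve independently and each one's contribution is
   unbiased: stochastic rounding preserves means, and a spawn target l is drawn
   with probability 1/||a_{o,k}||_0 and weighted by ||a_{o,k}||_0 |A_lk|.  Hence
   the cross terms vanish and E||F(A,v) - Av||^2 is the sum over particles of the
   variance of one contribution.  For a particle at k the spawn and diagonal
   parts live on distinct indices; each rounding adds at most 1/4 of variance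
   and the spawn has second moment ||a_{o,k}||_0 ||a_{o,k}||_2^2, so the variance
   is at most K := (||a_k||_0 - 2) ||a_{o,k}||_2^2 + 1/2 = C_e ||A||_1^2
   (maximised over k).  Summing over the M = ||v||_1 >= m particles gives the
   bound K M <= K M^2 / m. *)

From mathcomp Require Import all_boot all_order all_algebra ring lra.
(* Imported last, so that [frac] is the fractional part and not fraction.v's. *)
Set Implicit Arguments. Unset Strict Implicit. Unset Printing Implicit Defensive.
Import Order.TTheory GRing.Theory Num.Theory.
Local Open Scope ring_scope.

Section StochasticRounding.
Variable R : archiRealFieldType.
Implicit Types (Q : R) (b : bool).

Lemma round_valE Q b : round_val Q b = (Num.floor Q)%:~R + (if b then 1 else 0).
Proof. by rewrite /round_val intrD; case: b. Qed.

Lemma round_prob_sum Q : \sum_b round_prob Q b = 1.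
Proof. by rewrite big_bool /=; ring. Qed.

Lemma round_prob_mean Q : \sum_b round_prob Q b * round_val Q b = Q.
Proof. by rewrite big_bool /= !round_valE /frac; ring. Qed.

Definition round_var Q := frac Q * (1 - frac Q).

Lemma round_prob_sqr Q : \sum_b round_prob Q b * round_val Q b ^+ 2 = Q ^+ 2 + round_var Q.
Proof. by rewrite big_bool /= !round_valE /round_var /frac; ring. Qed.

Lemma round_var_le Q : round_var Q <= 4^-1.
Proof. have := sqr_ge0 (frac Q - 2^-1); rewrite /round_var; lra. Qed.

End StochasticRounding.

Section Moments.
Variable R : comRingType.

Lemma expect_add_indep (B1 B2 : finType) (p1 f : B1 -> R) (p2 g : B2 -> R) :
    \sum_b1 p1 b1 = 1 -> \sum_b2 p2 b2 = 1 ->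
  \sum_b1 \sum_b2 p1 b1 * p2 b2 * (f b1 + g b2)
    = \sum_b1 p1 b1 * f b1 + \sum_b2 p2 b2 * g b2.
Proof.
move=> p1_sum1 p2_sum1.
under eq_bigr do under eq_bigr do rewrite mulrDr.
rewrite (eq_bigr (fun b1 => p1 b1 * f b1 + p1 b1 * \sum_b2 p2 b2 * g b2)).
  by rewrite big_split /= -mulr_suml p1_sum1 mul1r.
move=> b1 _; rewrite big_split /= -mulr_suml -mulr_sumr p2_sum1 mulr1.
by rewrite mulr_sumr; congr (_ + _); apply: eq_bigr => b2 _; ring.
Qed.


Lemma second_moment_centered (O I : finType) (P : O -> R) (c : O -> I -> R) (mu : I -> R) :
    \sum_o P o = 1 -> (forall j, \sum_o P o * c o j = mu j) ->
  \sum_o P o * \sum_j (c o j - mu j) ^+ 2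
    = \sum_o P o * \sum_j c o j ^+ 2 - \sum_j mu j ^+ 2.
Proof.
move=> P1 Pmean; under eq_bigr do rewrite mulr_sumr.
under [in RHS]eq_bigr do rewrite mulr_sumr.
rewrite exchange_big [X in _ = X - _]exchange_big -sumrB; apply: eq_bigr => j _ /=.
have expand o : P o * (c o j - mu j) ^+ 2
    = P o * c o j ^+ 2 - 2 * mu j * (P o * c o j) + mu j ^+ 2 * P o by ring.
by rewrite (eq_bigr _ (fun o _ => expand o)) big_split sumrB /= -!mulr_sumr Pmean P1; ring.
Qed.

Variables I O : finType.
Implicit Types P f g : I -> O -> R.

Lemma expect_prod_ffun P f :
  \sum_(w : {ffun I -> O}) (\prod_i P i (w i)) * \prod_i f i (w i)
    = \prod_i \sum_o P i o * f i o.
Proof. by rewrite bigA_distr_bigA; apply: eq_bigr => w _; rewrite -big_split. Qed.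

Lemma second_moment_sum_indep P g :
    (forall i, \sum_o P i o = 1) -> (forall i, \sum_o P i o * g i o = 0) ->
  \sum_(w : {ffun I -> O}) (\prod_i P i (w i)) * (\sum_i g i (w i)) ^+ 2
    = \sum_i \sum_o P i o * g i o ^+ 2.
Proof.
move=> P1 centered.
have cross a b : \sum_(w : {ffun I -> O}) (\prod_i P i (w i)) * (g a (w a) * g b (w b))
    = if a == b then \sum_o P a o * g a o ^+ 2 else 0.
  pose f i o := (if i == a then g i o else 1) * (if i == b then g i o else 1).
  have -> : \sum_(w : {ffun I -> O}) (\prod_i P i (w i)) * (g a (w a) * g b (w b))
      = \sum_(w : {ffun I -> O}) (\prod_i P i (w i)) * \prod_i f i (w i).
    by apply: eq_bigr => w _; rewrite big_split /= -!big_mkcond !big_pred1_eq.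
  rewrite expect_prod_ffun (bigD1 a) //= {1}/f eqxx; case: (eqVneq a b) => [ab|_]; first subst b.
    rewrite [X in _ * X]big1; last first.
      move=> i /negbTE ia; rewrite -[RHS](P1 i).
      apply: eq_bigr => o _; by rewrite /f ia !mulr1.
    by rewrite mulr1; under eq_bigr do rewrite -expr2.
  rewrite (eq_bigr (fun o => P a o * g a o)) ?centered ?mul0r //.
  by move=> o _; rewrite mulr1.
have expand (w : {ffun I -> O}) : (\prod_i P i (w i)) * (\sum_i g i (w i)) ^+ 2
    = \sum_a \sum_b (\prod_i P i (w i)) * (g a (w a) * g b (w b)).
  by rewrite expr2 mulr_suml mulr_sumr; apply: eq_bigr => a _; rewrite !mulr_sumr.
under eq_bigr do rewrite expand.
rewrite exchange_big /=; apply: eq_bigr => a _.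
rewrite exchange_big /= (bigD1 a) //= cross eqxx [X in _ + X]big1 ?addr0 // => b ba.
by rewrite cross eq_sym (negbTE ba).
Qed.

End Moments.



Lemma sum_outcome (R : comRingType) N (F : outcome N -> R) :
  \sum_o F o = \sum_l \sum_b1 \sum_b2 F (l, b1, b2).
Proof.
rewrite (pair_bigA _ (fun l b1 => \sum_b2 F (l, b1, b2))) pair_bigA /=.
by apply: eq_bigr => -[[l b1] b2].
Qed.

Lemma sum_sqr_two_points (R : comRingType) (I : finType) (l k : I) (a b : R) : l != k ->
  \sum_j ((if j == l then a else 0) + (if j == k then b else 0)) ^+ 2 = a ^+ 2 + b ^+ 2.
Proof.
move=> lk.
rewrite (eq_bigr (fun j => (if j == l then a ^+ 2 else 0) + (if j == k then b ^+ 2 else 0))).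
  by rewrite big_split -!big_mkcond !big_pred1_eq.
move=> j _; case: (eqVneq j l) => [->|_]; first by rewrite (negbTE lk) !addr0.
by case: (j == k); rewrite ?add0r ?expr0n.
Qed.

Lemma nnz_col_off (R : archiRealFieldType) N (A : 'M[R]_N) k : A k k != 0 ->
  nnz_col A k = (nnz_off A k).+1.
Proof.
move=> Akk; rewrite /nnz_col /nnz_off.
have -> : [set i | A i k != 0] = k |: [set j | (j != k) && (A j k != 0)].
  by apply/setP => i; rewrite !inE; case: (eqVneq i k) => [->|].
by rewrite cardsU1 inE eqxx.
Qed.

Section Particle.
Variables (R : archiRealFieldType) (N : nat) (A : 'M[R]_N) (k : 'I_N) (x : R).
Hypotheses (Akk_neq0 : A k k != 0) (nnz_off_gt0 : (0 < nnz_off A k)%N) (x_neq0 : x != 0).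

Let s := Num.sg x.
Let d : R := (nnz_off A k)%:R.
Let spawn_prob (l : 'I_N) : R := if (l != k) && (A l k != 0) then d^-1 else 0.
Let Q1 (l : 'I_N) : R := d * `|A l k|.
Let Q2 : R := `|A k k|.

Let d_neq0 : d != 0. Proof. by rewrite pnatr_eq0 -lt0n. Qed.

Let spawn_prob_ge0 l : 0 <= spawn_prob l.
Proof. by rewrite /spawn_prob; case: ifP; rewrite ?invr_ge0 ?ler0n. Qed.

Let expect_spawn (h : 'I_N -> R) :
  \sum_l spawn_prob l * h l = d^-1 * \sum_(l | (l != k) && (A l k != 0)) h l.
Proof.
rewrite mulr_sumr [RHS]big_mkcond; apply: eq_bigr => l _ /=.
by rewrite /spawn_prob; case: ifP; rewrite ?mul0r.
Qed.

Let spawn_prob_sum1 : \sum_l spawn_prob l = 1.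
Proof.
rewrite -(eq_bigr _ (fun l _ => mulr1 (spawn_prob l))) expect_spawn sumr_const.
by rewrite (_ : #|_| = nnz_off A k) ?mulVf // /nnz_off cardsE.
Qed.

Let particle_probE l b1 b2 :
  particle_prob A k (l, b1, b2) = spawn_prob l * (round_prob (Q1 l) b1 * round_prob Q2 b2).
Proof. by rewrite /particle_prob mulrA. Qed.

Let expect_particle (F : outcome N -> R) :
  \sum_o particle_prob A k o * F o
    = \sum_l spawn_prob l * \sum_b1 \sum_b2 round_prob (Q1 l) b1 * round_prob Q2 b2 * F (l, b1, b2).
Proof.
rewrite sum_outcome; apply: eq_bigr => l _; rewrite mulr_sumr; apply: eq_bigr => b1 _.
by rewrite mulr_sumr; apply: eq_bigr => b2 _; rewrite particle_probE !mulrA.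
Qed.

Lemma particle_prob_sum1 : \sum_o particle_prob A k o = 1.
Proof.
rewrite sum_outcome -[RHS]spawn_prob_sum1; apply: eq_bigr => l _.
under eq_bigr do under eq_bigr do rewrite particle_probE.
under eq_bigr do rewrite -!mulr_sumr round_prob_sum mulr1.
by rewrite -mulr_sumr round_prob_sum mulr1.
Qed.

Let sgrMs a : Num.sg (a * s) = Num.sg a * s.
Proof. by rewrite sgrM sgr_id. Qed.

Let round_meanZ (Q c : R) : \sum_b round_prob Q b * (round_val Q b * c) = Q * c.
Proof. by rewrite -[in RHS](round_prob_mean Q) mulr_suml; apply: eq_bigr => b _; rewrite mulrA. Qed.

Lemma particle_mean j : \sum_o particle_prob A k o * particle_contrib A k s o j = A j k * s.
Proof.
pose e1 l := if j == l then Num.sg (A l k * s) else 0.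
pose e2 := if j == k then Num.sg (A k k * s) else 0.
have contribE l b1 b2 : particle_contrib A k s (l, b1, b2) j
    = round_val (Q1 l) b1 * e1 l + round_val Q2 b2 * e2.
  by rewrite /particle_contrib /e1 /e2; case: (j == l); case: (j == k); rewrite ?mulr0.
rewrite expect_particle.
under eq_bigr => l _ do under eq_bigr do under eq_bigr do rewrite contribE.
under eq_bigr => l _ do rewrite expect_add_indep ?round_prob_sum // !round_meanZ.
rewrite (eq_bigr (fun l => spawn_prob l * (Q1 l * e1 l) + spawn_prob l * (Q2 * e2))); last first.
  by move=> l _; rewrite mulrDr.
rewrite big_split -mulr_suml spawn_prob_sum1 mul1r /= expect_spawn big_mkcond /=.
pose spawn_mean := if (j != k) && (A j k != 0) then Q1 j * Num.sg (A j k * s) else 0.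
rewrite (eq_bigr (fun l => if l == j then spawn_mean else 0)); last first.
  by move=> l _; rewrite /e1 /spawn_mean; case: (eqVneq j l) => [->|]; case: ifP; rewrite ?mulr0.
rewrite -(big_mkcond (fun i => i == j)) big_pred1_eq /spawn_mean /e2 /Q1 /Q2 !sgrMs.
have normr_sgMs a : `|a| * (Num.sg a * s) = a * s by rewrite mulrA (mulrC `|a|) mulr_sg_norm.
case: (eqVneq j k) => [->|_] /=; first by rewrite mulr0 add0r normr_sgMs.
rewrite mulr0 addr0; case: (eqVneq (A j k) 0) => [->|_] /=; first by rewrite mulr0 mul0r.
by rewrite -mulrA mulKf // normr_sgMs.
Qed.

Let particle_second_moment :
  \sum_o particle_prob A k o * \sum_j particle_contrib A k s o j ^+ 2
    = \sum_l spawn_prob l * (Q1 l ^+ 2 + round_var (Q1 l)) + (Q2 ^+ 2 + round_var Q2).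
Proof.
rewrite expect_particle -[X in _ = _ + X]mul1r -spawn_prob_sum1 mulr_suml -big_split /=.
apply: eq_bigr => l _; rewrite -mulrDr.
have [/andP [lk Alk]|invalid] := boolP ((l != k) && (A l k != 0)); last first.
  by rewrite /spawn_prob (negbTE invalid) !mul0r.
have sqr_contrib b1 b2 : \sum_j particle_contrib A k s (l, b1, b2) j ^+ 2
    = round_val (Q1 l) b1 ^+ 2 + round_val Q2 b2 ^+ 2.
  rewrite sum_sqr_two_points // !exprMn !sgrMs !exprMn !sqr_sg Alk Akk_neq0 x_neq0.
  by rewrite !mulr1.
under eq_bigr do under eq_bigr do rewrite sqr_contrib.
by rewrite expect_add_indep ?round_prob_sum // !round_prob_sqr.
Qed.

Lemma particle_var_le :
  \sum_o particle_prob A k o * \sum_j (particle_contrib A k s o j - A j k * s) ^+ 2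
    <= ((nnz_col A k)%:R - 2) * sqnorm_off A k + 2^-1.
Proof.
rewrite (second_moment_centered particle_prob_sum1 particle_mean) particle_second_moment.
have mean_sqr : \sum_j (A j k * s) ^+ 2 = A k k ^+ 2 + sqnorm_off A k.
  by under eq_bigr do rewrite exprMn sqr_sg x_neq0 mulr1; rewrite (bigD1 k).
have spawn_sqr : \sum_l spawn_prob l * Q1 l ^+ 2 = d * sqnorm_off A k.
  rewrite expect_spawn /sqnorm_off big_mkcond [in RHS]big_mkcond mulr_sumr /=.
  rewrite mulr_sumr; apply: eq_bigr => l _; case: (l != k); last by rewrite !mulr0.
  have [->|_] /= := eqVneq (A l k) 0; first by rewrite expr2 !mulr0.
  by rewrite /Q1 exprMn real_normK ?num_real //; field.
have spawn_var : \sum_l spawn_prob l * round_var (Q1 l) <= 4^-1.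
  apply: (@le_trans _ _ (\sum_l spawn_prob l * 4^-1)).
    by apply: ler_sum => l _; rewrite ler_wpM2l ?spawn_prob_ge0 ?round_var_le.
  by rewrite -mulr_suml spawn_prob_sum1 mul1r.
have nnz_colE : (nnz_col A k)%:R = d + 1 :> R by rewrite nnz_col_off // -addn1 natrD.
have := round_var_le Q2.
under eq_bigr do rewrite mulrDr.
rewrite big_split /= spawn_sqr mean_sqr /Q2 real_normK ?num_real // nnz_colE.
lra.
Qed.

End Particle.

Lemma sum_particle (R : archiRealFieldType) N (v : 'I_N -> int) (G : 'I_N -> R) :
  \sum_(p : particle v) G (tag p) = \sum_k (absz (v k))%:R * G k.
Proof.
rewrite -(@sig_big_dep _ 0 +%R _ (fun k => 'I_(absz (v k))) xpredT (fun _ _ => true)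
                        (fun k _ => G k)).
by apply: eq_bigr => k _; rewrite sumr_const card_ord mulr_natl.
Qed.

Definition particle_var_bound (R : archiRealFieldType) N (A : 'M[R]_N) : R :=
  \big[Num.max/0]_k (((nnz_col A k)%:R - 2) * sqnorm_off A k) + 2^-1.

Lemma particle_var_bound_ge0 (R : archiRealFieldType) N (A : 'M[R]_N) :
  0 <= particle_var_bound A.
Proof. by rewrite addr_ge0 ?bigmax_ge_id ?invr_ge0 ?ler0n. Qed.

Section ExpectedError.
Variables (R : archiRealFieldType) (N : nat) (A : 'M[R]_N) (v : 'I_N -> int).
Hypotheses (Adiag_neq0 : forall k, A k k != 0) (nnz_col_ge2 : forall k, (2 <= nnz_col A k)%N).

Let nnz_off_gt0 k : (0 < nnz_off A k)%N.
Proof. by have := nnz_col_ge2 k; rewrite nnz_col_off. Qed.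

Let particle_err (j : 'I_N) (p : particle v) (o : outcome N) : R :=
  particle_contrib A (tag p) (sgnv R v (tag p)) o j - A j (tag p) * sgnv R v (tag p).

Let Fstep_sub_Amulv (w : {ffun particle v -> outcome N}) j :
  Fstep A w j - Amulv A v j = \sum_p particle_err j p (w p).
Proof.
rewrite /Fstep sumrB (sum_particle v (fun k => A j k * sgnv R v k)); congr (_ - _).
apply: eq_bigr => k _; rewrite /sgnv natr_absz intr_norm mulrCA.
by rewrite (mulrC `|_|) mulr_sg_norm.
Qed.

Let expected_sqerr_particles : expected_sqerr A v
  = \sum_p \sum_o particle_prob A (tag p) o * \sum_j particle_err j p o ^+ 2.
Proof.
have centered j (p : particle v) : \sum_o particle_prob A (tag p) o * particle_err j p o = 0.
  under eq_bigr do rewrite mulrBr.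
  by rewrite sumrB particle_mean // -mulr_suml particle_prob_sum1 // mul1r subrr.
rewrite /expected_sqerr.
under eq_bigr do under eq_bigr do rewrite Fstep_sub_Amulv.
under eq_bigr do rewrite mulr_sumr.
rewrite exchange_big /=.
have tag_prob_sum1 (p : particle v) := particle_prob_sum1 (nnz_off_gt0 (tag p)).
under eq_bigr do rewrite (second_moment_sum_indep tag_prob_sum1 (centered _)).
rewrite exchange_big /=; apply: eq_bigr => p _.
by rewrite exchange_big /=; apply: eq_bigr => o _; rewrite mulr_sumr.
Qed.

Lemma expected_sqerr_le : expected_sqerr A v <= particle_var_bound A * norm1_int R v.
Proof.
rewrite expected_sqerr_particles.
apply: (@le_trans _ _ (\sum_(p : particle v) particle_var_bound A)).
  apply: ler_sum => p _; apply: le_trans (particle_var_le (Adiag_neq0 _) (nnz_off_gt0 _) _) _.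
    by rewrite intr_eq0 -absz_gt0 (leq_ltn_trans _ (ltn_ord (tagged p))).
  by rewrite lerD2r; apply: le_bigmax.
rewrite (sum_particle v (fun _ => particle_var_bound A)) -mulr_suml mulrC /norm1_int.
by under [in leRHS]eq_bigr do rewrite -intr_norm -natr_absz.
Qed.

End ExpectedError.

Lemma norm1_mx_gt0 (R : archiRealFieldType) N (A : 'M[R]_N) k : A k k != 0 -> 0 < norm1_mx A.
Proof.
move=> Akk; apply: lt_le_trans (le_bigmax _ _ k).
by rewrite (bigD1 k) //= ltr_pwDl ?normr_gt0 ?sumr_ge0.
Qed.

Theorem mainTheorem5 (R : archiRealFieldType) (N : nat) (A : 'M[R]_N)
  (Hsym : A^T = A)
  (Hdiag : forall k : 'I_N, A k k != 0)
  (Hcol : forall k : 'I_N, (2 <= nnz_col A k)%N)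
  (m : R) (Hm : 0 < m)
  (v : 'I_N -> int) (HM : m <= @norm1_int R N v) :
  expected_sqerr A v <= C_e A * norm1_mx A ^+ 2 * @norm1_int R N v ^+ 2 / m.
Proof.
have M_gt0 : 0 < norm1_int R v := lt_le_trans Hm HM.
have [k0 _|v0] := pickP (fun k => v k != 0); last first.
  move: M_gt0; rewrite /norm1_int big1 ?ltxx // => k _.
  by move/negbFE/eqP: (v0 k) => ->; rewrite normr0.
have -> : C_e A * norm1_mx A ^+ 2 = particle_var_bound A.
  by rewrite /C_e divfK // expf_neq0 // gt_eqF // (norm1_mx_gt0 (Hdiag k0)).
rewrite ler_pdivlMr // expr2 mulrA.
apply: le_trans (ler_wpM2r (ltW Hm) (expected_sqerr_le v Hdiag Hcol)) _.
by rewrite ler_wpM2l // mulr_ge0 ?particle_var_bound_ge0 ?ltW.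
Qed.
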